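(* Let $a, b, n$ be positive integers with $b>1$, $n>1$ and $\gcd(r_b(n),a)=1$. Then \[\operatorname{Ap}(S_a(b,n)) = \left\{ \sum_{i=2}^n u_i a_i \;\middle|\; (u_2,\ldots,u_n) \in R(b,n)\right\}.\]
   Context: For an integer $\ell \ge 1$, $r_b(\ell) = \sum_{j=0}^{\ell-1} b^j$, and $r_b(0)=0$. For $i \ge 1$, $a_i := r_b(n) + a\, r_b(i-1)$; $S_a(b,n)$ is the numerical semigroup generated by $\{a_i : i\ge 1\}$ (its multiplicity is $a_1$). For a numerical semigroup $S$ and $s\in S$, $\operatorname{Ap}(S,s) = \{\omega \in S : \omega - s \notin S\}$, and $\operatorname{Ap}(S) := \operatorname{Ap}(S, \operatorname{m}(S))$ where $\operatorname{m}(S)$ is the smallest nonzero element of $S$. For $i\ge 2$, $R(b,i)$ is the set of $(u_2,\ldots,u_i) \in \mathbb{N}^{i-1}$ with $0 \le u_j \le b$ for all $j$, and such that $u_j = b$ implies $u_k = 0$ for all $2\le k<j$. *)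

From mathcomp Require Import all_boot.
Set Implicit Arguments. Unset Strict Implicit. Unset Printing Implicit Defensive.

Definition rb (b l : nat) : nat := \sum_(0 <= j < l) b ^ j.

Definition gen_a (a b n i : nat) : nat := rb b n + a * rb b (i - 1).

Inductive gen_monoid (G : nat -> Prop) : nat -> Prop :=
| gm0 : gen_monoid G 0
| gmS x g : gen_monoid G x -> G g -> gen_monoid G (x + g).

Definition Sa (a b n : nat) : nat -> Prop :=
  gen_monoid (fun g => exists i, 1 <= i /\ g = gen_a a b n i).

Definition is_multiplicity (S : nat -> Prop) (m : nat) : Prop :=
  S m /\ 0 < m /\ (forall y, S y -> 0 < y -> m <= y).

(* Ap(S, s) = { w in S : w - s notin S } (w - s taken in Z, so w < s counts) *)
Definition Apery (S : nat -> Prop) (s w : nat) : Prop :=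
  S w /\ (w < s \/ ~ S (w - s)).

Definition Apery_m (S : nat -> Prop) (w : nat) : Prop :=
  exists m, is_multiplicity S m /\ Apery S m w.

(* R(b,i): (u_2,...,u_i) with 0 <= u_j <= b and u_j = b -> u_k = 0 for 2<=k<j.
   Represented by u : nat -> nat, only the entries 2..i are relevant. *)
Definition inR (b i : nat) (u : nat -> nat) : Prop :=
  (forall j, 2 <= j <= i -> u j <= b) /\
  (forall j, 2 <= j <= i -> u j = b -> forall k, 2 <= k < j -> u k = 0).

From mathcomp Require Import zify.
From mathcomp Require Import all_boot.
Set Implicit Arguments. Unset Strict Implicit.

(* Write m = r_b(n). Every element of S_a(b,n) is C m + a K with C the number
   of generators used; since a_i = m + a r_b(i-1), adding a generator adds
   r_b(i-1) to K. Expand K mod m greedily in the mixed radix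
   r_b(n-1) > ... > r_b(1) = 1: adding some r_b(j) raises the digit sum by at
   most one plus the number of carries past m, and r_b(j+n) = r_b(j) mod m,
   so the digit sum of K mod m stays at most C + K div m. The greedy digit
   strings are exactly R(b,n). So if w = C m + a K is in the Apery set, the
   surplus of C + a (K div m) over that digit sum must vanish, and w has the
   stated form; conversely, for w = m D + a N of that form, w - m = C m + a K
   would force N = K mod m (as a is coprime to m) and D = C + 1 + a (K div m),
   exceeding the digit sum D of N. *)

Lemma rb0 b : rb b 0 = 0.
Proof. by rewrite /rb big_geq. Qed.

Lemma rbS b l : rb b l.+1 = 1 + b * rb b l.
Proof.
rewrite /rb big_nat_recl // expn0 big_distrr /=; congr (_ + _).
by apply: eq_bigr => i _; rewrite expnS.
Qed.

Lemma rb_gt0 b l : 0 < l -> 0 < rb b l.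
Proof. by case: l => // l _; rewrite rbS. Qed.

Lemma ltn_rb b j l : 1 < b -> j < l -> rb b j < rb b l.
Proof.
move=> b_gt1; elim: l => // l IH; rewrite ltnS leq_eqVlt rbS.
by case/orP=> [/eqP-> | /IH]; nia.
Qed.

Lemma rbD b n k : rb b (n + k) = rb b k + b ^ k * rb b n.
Proof.
elim: k => [|k IH]; first by rewrite addn0 rb0 expn0 mul1n.
by rewrite addnS !rbS IH expnS; nia.
Qed.

Variant divn_modn_spec (m : nat) : nat -> nat -> nat -> Prop :=
  DivnModnSpec q k of k < m : divn_modn_spec m (q * m + k) q k.

Lemma divn_modnP m K : 0 < m -> divn_modn_spec m K (K %/ m) (K %% m).
Proof. by move=> m_gt0; rewrite {1}(divn_eq K m); constructor; apply: ltn_pmod. Qed.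
Arguments divn_modnP {m} K _.

(* The digit sum of the greedy expansion of K over the weights
   r_b(l-1) > ... > r_b(1) = 1; the last division is by r_b(0) = 0 and
   contributes 0. *)
Fixpoint rdigsum (b l K : nat) : nat :=
  if l is l'.+1 then K %/ rb b l' + rdigsum b l' (K %% rb b l') else 0.

Lemma rdigsum0 b l : rdigsum b l 0 = 0.
Proof. by elim: l => //= l IH; rewrite div0n mod0n IH. Qed.

Lemma rdigsumS b l d k :
  k < rb b l -> rdigsum b l.+1 (d * rb b l + k) = d + rdigsum b l k.
Proof.
move=> k_lt /=; have r_gt0 : 0 < rb b l by apply: leq_ltn_trans k_lt.
by rewrite divnMDl // divn_small // addn0 modnMDl modn_small.
Qed.

Lemma rdigsum_rb_pred b l : rdigsum b l (rb b l - 1) <= b.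
Proof.
case: l => // l; rewrite rbS addKn.
case: l => [|l]; first by rewrite /= rb0 divn0.
by rewrite -[b * _]addn0 rdigsumS ?rb_gt0 // rdigsum0 addn0.
Qed.

Lemma rdigsum_pred b l K : rdigsum b l (K - 1) <= rdigsum b l K + (b - 1).
Proof.
elim: l K => // l IH K.
case: (posnP l) => [-> | l_gt0]; first by rewrite /= rb0 !divn0.
set r := rb b l; have r_gt0 : 0 < r by apply: rb_gt0.
case: (divn_modnP K r_gt0) => d k k_lt.
case: (posnP k) => [-> | k_gt0]; last first.
  have -> : d * r + k - 1 = d * r + (k - 1) by lia.
  rewrite !rdigsumS ?(leq_ltn_trans (leq_subr 1 k)) //.
  by have := IH k; lia.
case: d => [|d]; first by rewrite mul0n addn0 sub0n leq_addr.
have -> : d.+1 * r + 0 - 1 = d * r + (r - 1) by rewrite mulSn; lia.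
rewrite !rdigsumS //; last by lia.
by have := rdigsum_rb_pred b l; rewrite -/r rdigsum0; lia.
Qed.

(* With d <= b + 1, normalising d r_b(l) + k produces at most one carry
   out of r_b(l+1), and the digit sum plus that carry is at most d plus the
   digit sum of k. *)
Lemma rdigsum_carry b l d k : 1 < b -> k < rb b l -> d <= b.+1 ->
  rdigsum b l.+1 ((d * rb b l + k) %% rb b l.+1)
    + (d * rb b l + k) %/ rb b l.+1 <= d + rdigsum b l k.
Proof.
move=> b_gt1 k_lt d_le; set r := rb b l; rewrite rbS -/r.
have r_gt0 : 0 < r by apply: leq_ltn_trans k_lt.
case: (ltnP (d * r + k) (1 + b * r)) => [no_carry | carry].
  by rewrite modn_small // divn_small // addn0 rdigsumS.
have b_le_d : b <= d by rewrite -ltnS -(ltn_pmul2r r_gt0) mulSn; lia.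
have dr_le : d * r <= b.+1 * r by rewrite leq_mul2r d_le orbT.
have -> : d * r + k = 1 * (1 + b * r) + (d * r + k - (1 + b * r)) by lia.
have small : d * r + k - (1 + b * r) < 1 + b * r by nia.
rewrite modnMDl divnMDl ?modn_small ?divn_small // addn0.
case: (posnP k) => [k0 | k_gt0].
  have d_eq : d = b.+1.
    by apply/eqP; rewrite eqn_leq d_le -(ltn_pmul2r r_gt0); lia.
  have -> : d * r + k - (1 + b * r) = 0 * r + (r - 1) by rewrite k0 d_eq; lia.
  rewrite rdigsumS; last by lia.
  by have := rdigsum_rb_pred b l; rewrite -/r; lia.
have -> : d * r + k - (1 + b * r) = (d - b) * r + (k - 1).
  by rewrite mulnBl; have := leq_mul2r r b d; rewrite b_le_d orbT; lia.
rewrite rdigsumS; last by lia.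
by have := rdigsum_pred b l k; lia.
Qed.

Lemma rdigsum_add_rb b l j K : 1 < b -> K < rb b l -> j < l ->
  rdigsum b l ((K + rb b j) %% rb b l) + (K + rb b j) %/ rb b l
    <= rdigsum b l K + 1.
Proof.
move=> b_gt1; elim: l K j => // l IH K j.
case: (posnP l) => [-> | l_gt0].
  rewrite rbS rb0 muln0 ltnS leqn0 ltnS leqn0 => /eqP-> /eqP->.
  by rewrite rb0 /= rb0 !divn0.
set r := rb b l; have r_gt0 : 0 < r by apply: rb_gt0.
rewrite {1}rbS -/r; case: (divn_modnP K r_gt0) => d k k_lt K_lt j_le.
have d_le : d <= b by rewrite -(leq_pmul2r r_gt0); lia.
rewrite rdigsumS //.
move: j_le; rewrite ltnS leq_eqVlt => /orP[/eqP-> | j_lt].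
  have -> : d * r + k + r = d.+1 * r + k by rewrite mulSn; lia.
  by have := @rdigsum_carry b l d.+1 k b_gt1 k_lt d_le; rewrite -/r; lia.
have := IH k j k_lt j_lt; rewrite -/r -addnA.
have : k + rb b j < 2 * r by have := ltn_rb b_gt1 j_lt; rewrite -/r; lia.
case: (divn_modnP (k + rb b j) r_gt0) => q k' k'_lt sum_lt IHk.
have q_le1 : q <= 1 by rewrite -ltnS -(ltn_pmul2r r_gt0); lia.
have -> : d * r + (q * r + k') = (d + q) * r + k' by rewrite mulnDl addnA.
by have := @rdigsum_carry b l (d + q) k' b_gt1 k'_lt ltac:(lia); rewrite -/r; lia.
Qed.

Lemma rdigsum_bound_add_rb b n t C K : 1 < b -> 0 < n ->
  rdigsum b n (K %% rb b n) <= C + K %/ rb b n ->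
  rdigsum b n ((K + rb b t) %% rb b n) <= C.+1 + (K + rb b t) %/ rb b n.
Proof.
move=> b_gt1 n_gt0; set m := rb b n; have m_gt0 : 0 < m by apply: rb_gt0.
elim/ltn_ind: t => t IH bound.
case: (ltnP t n) => [t_lt | t_ge]; last first.
  have -> : rb b t = rb b (t - n) + b ^ (t - n) * m by rewrite -rbD subnKC.
  rewrite addnA addnC modnMDl divnMDl //.
  by have := IH (t - n) ltac:(lia) bound; lia.
move: bound; case: (divn_modnP K m_gt0) => q k k_lt bound.
rewrite -addnA modnMDl divnMDl //.
have := rdigsum_add_rb b_gt1 k_lt t_lt; rewrite -/m.
by move: (rdigsum b n _) ((k + rb b t) %/ m) => X Y; lia.
Qed.

Definition wsum b l (u : nat -> nat) := \sum_(2 <= i < l.+1) u i * rb b (i - 1).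
Definition csum l (u : nat -> nat) := \sum_(2 <= i < l.+1) u i.

Lemma wsum1 b u : wsum b 1 u = 0.
Proof. by rewrite /wsum big_geq. Qed.

Lemma csum1 u : csum 1 u = 0.
Proof. by rewrite /csum big_geq. Qed.

Lemma wsumS b l u : 0 < l -> wsum b l.+1 u = wsum b l u + u l.+1 * rb b l.
Proof. by move=> l_gt0; rewrite /wsum big_nat_recr //= subn1. Qed.

Lemma csumS l u : 0 < l -> csum l.+1 u = csum l u + u l.+1.
Proof. by move=> l_gt0; rewrite /csum big_nat_recr. Qed.

Lemma wsum_eq0 b l u : wsum b l u = 0 <-> forall k, 2 <= k <= l -> u k = 0.
Proof.
rewrite /wsum; split=> [/eqP | u0].
  rewrite sum_nat_seq_eq0 => /allP u0 k k_in; apply/eqP.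
  have rb_pos : 0 < rb b (k - 1) by apply: rb_gt0; lia.
  have /implyP/(_ isT) := u0 k ltac:(by rewrite mem_index_iota ltnS).
  by rewrite muln_eq0 => /orP[// | /eqP rb_eq0]; rewrite rb_eq0 in rb_pos.
by rewrite big_nat_cond big1 // => i /andP[i_in _]; rewrite u0 //; lia.
Qed.

Lemma inR_pred b l u : inR b l.+1 u -> inR b l u.
Proof.
case=> u_le u_top; split=> [j j_in | j j_in u_j]; first by apply: u_le; lia.
by apply: u_top => //; lia.
Qed.

Lemma inR_wsum b l u : 0 < l -> inR b l u ->
  wsum b l u < rb b l /\ rdigsum b l (wsum b l u) = csum l u.
Proof.
elim: l => // l IH _ uR.
case: (posnP l) => [-> | l_gt0].
  by rewrite wsum1 csum1 rbS rb0 /= rb0 divn0.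
have [N_lt G_N] := IH l_gt0 (inR_pred uR).
rewrite wsumS // csumS // addnC rdigsumS // G_N addnC; split; last exact: addnC.
case: uR => u_le u_top; rewrite rbS.
case: (ltnP (u l.+1) b) => [lt_ub | le_bu].
  by have := leq_mul2r (rb b l) (u l.+1).+1 b; rewrite lt_ub orbT mulSn; lia.
have u_eq : u l.+1 = b by apply/eqP; rewrite eqn_leq le_bu u_le //; lia.
have -> : wsum b l u = 0.
  by apply/wsum_eq0 => k k_in; apply: (u_top l.+1) => //; lia.
by rewrite u_eq; lia.
Qed.

Lemma exists_inR_wsum b l K : K < rb b l -> exists2 u, inR b l u & wsum b l u = K.
Proof.
elim: l K => [|l IH] K; first by rewrite rb0.
case: (posnP l) => [-> | l_gt0].
  rewrite rbS rb0 muln0 ltnS leqn0 => /eqP->.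
  by exists (fun=> 0); [split=> j; lia | rewrite wsum1].
set r := rb b l; have r_gt0 : 0 < r by apply: rb_gt0.
rewrite rbS -/r; case: (divn_modnP K r_gt0) => d k k_lt K_lt.
have d_le : d <= b by rewrite -(leq_pmul2r r_gt0); lia.
have [v [v_le v_top] v_sum] := IH k k_lt.
exists (fun i => if i == l.+1 then d else v i); last first.
  rewrite wsumS // eqxx -v_sum addnC; congr (_ + _).
  by apply: eq_big_nat => i i_in; rewrite ifN //; apply/eqP; lia.
split=> j j_in; case: eqP => [j_eq | /eqP j_neq]; [lia | apply: v_le; lia | |].
  move=> d_eq k' k'_in; rewrite ifN; last by apply/eqP; lia.
  have : k = 0 by move: K_lt; rewrite d_eq; lia.
  by rewrite -v_sum => /wsum_eq0; apply; lia.
move=> v_j k' k'_in; rewrite ifN; last by apply/eqP; lia.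
by apply: (v_top j) => //; lia.
Qed.

Lemma gen_monoidD (P : nat -> Prop) x y :
  gen_monoid P x -> gen_monoid P y -> gen_monoid P (x + y).
Proof.
move=> Px; elim=> [|y' g _ IH Pg]; first by rewrite addn0.
by rewrite addnA; apply: gmS.
Qed.

Lemma gen_monoid_gen (P : nat -> Prop) g : P g -> gen_monoid P g.
Proof. by move=> Pg; rewrite -[g]add0n; apply: gmS => //; apply: gm0. Qed.

Lemma gen_monoidMl (P : nat -> Prop) c x : gen_monoid P x -> gen_monoid P (c * x).
Proof.
move=> Px; elim: c => [|c IH]; first by rewrite mul0n; apply: gm0.
by rewrite mulSn; apply: gen_monoidD.
Qed.

Lemma coprime_mod_mull_inj m a x y : coprime m a -> x < m -> y < m ->
  a * x = a * y %[mod m] -> x = y.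
Proof.
move=> co x_lt y_lt.
wlog le_xy : x y x_lt y_lt / x <= y => [hwlog e | e].
  by case: (leqP x y) => [|/ltnW] le; [apply: hwlog | symmetry; apply: hwlog].
have : m %| a * y - a * x by rewrite -eqn_mod_dvd ?leq_mul2l ?le_xy ?orbT // e.
rewrite -mulnBr Gauss_dvdr //; case: (posnP (y - x)) => [|y_gt_x]; first by lia.
by move/(dvdn_leq y_gt_x); lia.
Qed.

Section NumericalSemigroup.

Variables a b n : nat.

Lemma gen_a1 : gen_a a b n 1 = rb b n.
Proof. by rewrite /gen_a subnn rb0 muln0 addn0. Qed.

Lemma Sa_rb : Sa a b n (rb b n).
Proof. by apply: gen_monoid_gen; exists 1; rewrite gen_a1. Qed.

Lemma rb_leq_Sa y : Sa a b n y -> 0 < y -> rb b n <= y.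
Proof. by case=> [//|x g _ [i [_ ->]] _]; rewrite /gen_a; lia. Qed.

Lemma sum_gen_aE u :
  \sum_(2 <= i < n.+1) u i * gen_a a b n i = rb b n * csum n u + a * wsum b n u.
Proof.
rewrite /gen_a /csum /wsum !big_distrr -big_split /=.
by apply: eq_bigr => i _; lia.
Qed.

Lemma Sa_rb_wsum u : Sa a b n (rb b n * csum n u + a * wsum b n u).
Proof.
rewrite -sum_gen_aE big_nat_cond; apply: (big_ind (Sa a b n)); first exact: gm0.
  by move=> x y; apply: gen_monoidD.
move=> i /andP[/andP[i_ge2 _] _]; apply/gen_monoidMl/gen_monoid_gen.
by exists i; split=> //; lia.
Qed.

Hypotheses (a_gt0 : 0 < a) (b_gt1 : 1 < b) (n_gt0 : 0 < n).

Lemma Apery_m_Sa w : Apery_m (Sa a b n) w <-> Apery (Sa a b n) (rb b n) w.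
Proof.
have rb_gt0n : 0 < rb b n by apply: rb_gt0.
split=> [[m [[Sm [m_gt0 m_min]] Apw]] | Apw].
  suff -> : rb b n = m by [].
  by apply/eqP; rewrite eqn_leq rb_leq_Sa // (m_min _ Sa_rb rb_gt0n).
exists (rb b n); split=> //; split; first exact: Sa_rb.
by split=> // y; apply: rb_leq_Sa.
Qed.

Lemma Sa_invariant w : Sa a b n w -> exists C K,
  w = C * rb b n + a * K /\ rdigsum b n (K %% rb b n) <= C + K %/ rb b n.
Proof.
elim=> [|x g _ [C [K [-> bound]]] [i [_ ->]]].
  by exists 0, 0; rewrite mod0n div0n rdigsum0 muln0.
exists C.+1, (K + rb b (i - 1)); split; first by rewrite /gen_a mulSn; lia.
exact: rdigsum_bound_add_rb.
Qed.

Lemma Apery_Sa_wsum w : Apery (Sa a b n) (rb b n) w ->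
  exists2 u, inR b n u & w = rb b n * csum n u + a * wsum b n u.
Proof.
case=> /Sa_invariant[C [K [-> bound]]].
set m := rb b n in bound *; have m_gt0 : 0 < m by apply: rb_gt0.
move: bound; case: (divn_modnP K m_gt0) => q k k_lt bound Apw.
have [u uR u_sum] := exists_inR_wsum k_lt.
have [_ G_u] := inR_wsum n_gt0 uR; rewrite u_sum in G_u.
exists u => //; rewrite u_sum.
have q_le : q <= a * q by rewrite leq_pmull.
case: (ltnP (csum n u) (C + a * q)) => [lt_sum | ?]; last first.
  have sum_eq : csum n u = C + a * q by lia.
  by rewrite sum_eq; nia.
exfalso; case: Apw => [|]; first by nia.
apply; set e := C + a * q - (csum n u).+1.
have : (C + a * q) * m = (csum n u + e).+1 * m by congr (_ * _); lia.
rewrite !mulnDl mulSn => eq_m.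
have -> : C * m + a * (q * m + k) - m = m * csum n u + a * k + e * m by nia.
rewrite -u_sum; apply: gen_monoidD; first exact: Sa_rb_wsum.
exact/gen_monoidMl/Sa_rb.
Qed.

Lemma wsum_Apery_Sa u : coprime (rb b n) a -> inR b n u ->
  Apery (Sa a b n) (rb b n) (rb b n * csum n u + a * wsum b n u).
Proof.
move=> co uR; split; first exact: Sa_rb_wsum.
have [N_lt G_N] := inR_wsum n_gt0 uR.
set m := rb b n in co N_lt *; have m_gt0 : 0 < m by apply: rb_gt0.
set N := wsum b n u in N_lt G_N *; set D := csum n u in G_N *.
case: (ltnP (m * D + a * N) m) => [|ge_m]; [by left | right => Sw].
have [C [K [ew bound]]] := Sa_invariant Sw; move: ew bound.
case: (divn_modnP K m_gt0) => q k k_lt ew bound.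
have E : D * m + a * N = (C.+1 + a * q) * m + a * k by nia.
have N_eq : N = k.
  apply: coprime_mod_mull_inj co N_lt k_lt _.
  by move/(congr1 (modn^~ m)): E; rewrite !modnMDl.
have : D * m = (C.+1 + a * q) * m by rewrite N_eq in E; lia.
move/eqP; rewrite eqn_pmul2r // => /eqP D_eq.
have : q <= a * q by rewrite leq_pmull.
rewrite N_eq in G_N; lia.
Qed.

End NumericalSemigroup.

Theorem theorem15 (a b n : nat) :
  0 < a -> 1 < b -> 1 < n -> coprime (rb b n) a ->
  forall w : nat,
    Apery_m (Sa a b n) w <->
    exists u : nat -> nat,
      inR b n u /\ w = \sum_(2 <= i < n.+1) u i * gen_a a b n i.
Proof.
move=> a_gt0 b_gt1 n_gt1 co w; have n_gt0 : 0 < n by apply: ltnW.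
rewrite Apery_m_Sa //; split=> [/Apery_Sa_wsum[] // u uR -> | [u [uR ->]]].
  by exists u; rewrite sum_gen_aE.
by rewrite sum_gen_aE; apply: wsum_Apery_Sa.
Qed.
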